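(* Let $A_{\mathbb{Z}}$ and $d_{\mathbb{Z}}:A_{\mathbb{Z}}\to\mathbb{Z}$ be as in the context, let $\lambda$ be the measure on $[0,1)\times A_{\mathbb{Z}}$ given by $\int f\,d\lambda=\int_0^1\sum_{\omega\in A_{\mathbb{Z}}}f(x,\omega)\,dx$, and define $\mathcal E:L^2(\mathbb{R})\to L^2([0,1)\times A_{\mathbb{Z}},\lambda)$ by $\mathcal Ef(x,\omega)=f(x+d_{\mathbb{Z}}(\omega))$. Then $\mathcal E$ is a unitary isomorphism and it intertwines the representations: $\mathcal E\hat T=\tilde T\mathcal E$ and $\mathcal E\hat U=\tilde U\mathcal E$, where on $L^2(\mathbb{R})$, $\hat Tf(\xi)=e^{2\pi i\xi}f(\xi)$, $\hat Uf(\xi)=\sqrt2 f(2\xi)$, and on $L^2([0,1)\times A_{\mathbb{Z}},\lambda)$, $\tilde Tf(x,\omega)=e^{2\pi ix}f(x,\omega)$, $\tilde Uf(x,\omega)=\sqrt2 f(\tilde r(x,\omega))$.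
   Context: Words: $\underline0=000\cdots$, $\underline1=111\cdots$; $A_0=\{\omega_1\cdots\omega_n\underline0\}$, $A_1=\{\omega_1\cdots\omega_n\underline1\}$ ($n\ge0$, $\omega_i\in\{0,1\}$), $A_{\mathbb{Z}}=A_0\cup A_1$. $d_{\mathbb{Z}}(\omega_1\cdots\omega_n\underline0)=\sum_{k=1}^n\omega_k2^{k-1}$ and $d_{\mathbb{Z}}(\omega_1\cdots\omega_n\underline1)=\sum_{k=1}^n\omega_k2^{k-1}-2^n$ (a bijection $A_{\mathbb{Z}}\to\mathbb{Z}$). On $[0,1)$: $r(x)=2x\bmod1$, $\tau_0(x)=x/2$, $\tau_1(x)=(x+1)/2$, and $\omega_x\in\{0,1\}$ is the digit with $\tau_{\omega_x}(r(x))=x$. $\tilde r(x,\omega_1\omega_2\cdots)=(r(x),\omega_x\omega_1\omega_2\cdots)$. *)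

From HB Require Import structures.
From mathcomp Require Import all_boot all_order all_algebra.
From mathcomp Require Import all_classical all_reals all_analysis.
From mathcomp Require Import complex.
Set Implicit Arguments. Unset Strict Implicit. Unset Printing Implicit Defensive.
Import Order.TTheory GRing.Theory Num.Theory.
Local Open Scope classical_set_scope.
Local Open Scope ring_scope.

Section Defs.
Variable R : realType.

Definition C := complex R.
Definition cre (z : C) : R := complex.Re z.
Definition cim (z : C) : R := complex.Im z.
Definition csq (z : C) : R := cre z ^+ 2 + cim z ^+ 2.
Definition creal (a : R) : C := Complex a 0.
Definition cexpi (t : R) : C := Complex (cos t) (sin t).

(** Words omega_1 omega_2 ... are infinite binary sequences, indexed from 0:
    w 0 = omega_1, w 1 = omega_2, ... *)
Definition word := nat -> bool.

Definition A0 : set word :=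
  [set w | exists n : nat, forall k, (n <= k)%N -> w k = false].
Definition A1 : set word :=
  [set w | exists n : nat, forall k, (n <= k)%N -> w k = true].
Definition AZ : set word := A0 `|` A1.

(** An index n after which w is constant (w = w_0 ... w_{n-1} (w_n)^oo);
    chosen classically (0 if w is not eventually constant). *)
Definition tail_index (w : word) : nat :=
  xget 0%N [set n | forall k, (n <= k)%N -> w k = w n].

(** d_Z(w_1...w_n 0^oo) = sum_k w_k 2^(k-1),
    d_Z(w_1...w_n 1^oo) = sum_k w_k 2^(k-1) - 2^n *)
Definition dZ (w : word) : int :=
  let n := tail_index w in
  (\sum_(k < n) (w k)%:Z * 2 ^+ k) - (w n)%:Z * 2 ^+ n.

Definition r (x : R) : R := 2 * x - (Num.floor (2 * x))%:~R.
Definition tau0 (x : R) : R := x / 2.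
Definition tau1 (x : R) : R := (x + 1) / 2.
Definition omega_x (x : R) : bool := tau1 (r x) == x.
Definition wcons (b : bool) (w : word) : word :=
  fun k => if k is k'.+1 then w k' else b.
Definition rtilde (xw : R * word) : R * word :=
  (r xw.1, wcons (omega_x xw.1) xw.2).

Definition I01 : set R := `[0, 1[.

Definition sqnormR (f : R -> C) : \bar R :=
  (\int[lebesgue_measure]_x ((csq (f x))%:E))%E.
Definition L2R (f : R -> C) : Prop :=
  [/\ measurable_fun setT (cre \o f), measurable_fun setT (cim \o f)
    & (sqnormR f < +oo)%E].

(** L^2([0,1) x A_Z, lambda) with  int g dlambda = int_0^1 sum_{w in A_Z} g(x,w) dx.
    Functions on [0,1) x A_Z are represented as curried maps R -> word -> C
    (only values on [0,1) x A_Z matter). Measurability w.r.t. the product of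
    the Borel sigma-algebra on [0,1) and the discrete one on the countable
    set A_Z amounts to measurability of every slice. *)
Definition sqnormA (g : R -> word -> C) : \bar R :=
  (\int[lebesgue_measure]_(x in I01) (\esum_(w in AZ) (csq (g x w))%:E))%E.
Definition L2A (g : R -> word -> C) : Prop :=
  (forall w, AZ w -> measurable_fun I01 (cre \o g ^~ w)
                   /\ measurable_fun I01 (cim \o g ^~ w))
  /\ (sqnormA g < +oo)%E.

Definition Eop (f : R -> C) : R -> word -> C :=
  fun x w => f (x + (dZ w)%:~R).

Definition That (f : R -> C) : R -> C := fun xi => cexpi (2 * pi * xi) * f xi.
Definition Uhat (f : R -> C) : R -> C := fun xi => creal (Num.sqrt 2) * f (2 * xi).
Definition Ttil (g : R -> word -> C) : R -> word -> C :=
  fun x w => cexpi (2 * pi * x) * g x w.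
Definition Util (g : R -> word -> C) : R -> word -> C :=
  fun x w => creal (Num.sqrt 2) * g (rtilde (x, w)).1 (rtilde (x, w)).2.

End Defs.

From HB Require Import structures.
From mathcomp Require Import all_boot all_order all_algebra.
From mathcomp Require Import all_classical all_reals all_analysis.
From mathcomp Require Import complex measurable_realfun ring lra zify.
Set Implicit Arguments. Unset Strict Implicit. Unset Printing Implicit Defensive.
Import Order.TTheory GRing.Theory Num.Theory.
Local Open Scope classical_set_scope.
Local Open Scope ring_scope.

(** A word of A_Z is the two's complement binary expansion of the integer
    d_Z(w), i.e. d_Z(b w) = b + 2 d_Z(w); hence d_Z is a bijection from A_Z
    onto Z and (x, w) |-> x + d_Z(w) identifies [0,1) x A_Z with R, the word w
    indexing the unit cell [d_Z(w), d_Z(w) + 1). E is therefore an isometry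
    by translation invariance of Lebesgue measure, summed over the cells, and
    it is onto because the cell of t is read off floor t. The multiplication
    by e^(2 pi i x) commutes with E since it is 1-periodic, and the dilation
    does because 2 x = r(x) + omega_x yields
    2 (x + d_Z(w)) = r(x) + d_Z(omega_x w). *)

Definition wtail (w : word) : word := fun k => w k.+1.

Definition constant_from (w : word) (n : nat) :=
  forall k, (n <= k)%N -> w k = w n.

Definition dZ_at (w : word) (n : nat) : int :=
  (\sum_(k < n) (w k)%:Z * 2 ^+ k) - (w n)%:Z * 2 ^+ n.

Lemma AZ_constant_from w : AZ w <-> exists n, constant_from w n.
Proof.
split=> [[] [n wn]|[n wn]];
  last by case wnE: (w n); [right|left]; exists n => k /wn ->.
all: by exists n => k nk; rewrite (wn k nk) wn.
Qed.

Lemma constant_fromW w n m :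
  constant_from w n -> (n <= m)%N -> constant_from w m.
Proof. by move=> wn nm k mk; rewrite (wn k (leq_trans nm mk)) (wn m nm). Qed.

Lemma dZ_atS w n : constant_from w n -> dZ_at w n.+1 = dZ_at w n.
Proof.
by move=> wn; rewrite /dZ_at big_ord_recr /= (wn n.+1 (leqnSn n)) exprS; ring.
Qed.

Lemma dZ_at_stable w n m :
  constant_from w n -> (n <= m)%N -> dZ_at w m = dZ_at w n.
Proof.
move=> wn /subnKC <-; elim: (m - n)%N => [|k IHk]; first by rewrite addn0.
by rewrite addnS dZ_atS ?IHk //; apply: constant_fromW wn (leq_addr k n).
Qed.

Lemma dZE w n : constant_from w n -> dZ w = dZ_at w n.
Proof.
move=> wn; have wt : constant_from w (tail_index w).
  by apply: xgetPex; exists n.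
rewrite /dZ -/(dZ_at w _) -(dZ_at_stable wt (leq_maxl _ n)).
exact: dZ_at_stable wn (leq_maxr _ n).
Qed.

Lemma dZ_const b : dZ (fun=> b) = - b%:Z.
Proof. by rewrite (@dZE _ 0%N) // /dZ_at big_ord0 expr0 mulr1 add0r. Qed.

Lemma constant_from_wcons b w n :
  constant_from w n -> constant_from (wcons b w) n.+1.
Proof. by move=> wn [|k] //= /wn. Qed.

Lemma dZ_at_wcons b w n : dZ_at (wcons b w) n.+1 = b%:Z + 2 * dZ_at w n.
Proof.
rewrite /dZ_at big_ord_recl /= expr0 mulr1 exprS.
under eq_bigr do rewrite /bump /= exprS mulrCA.
by rewrite -mulr_sumr; ring.
Qed.

Lemma AZ_wcons b w : AZ w -> AZ (wcons b w).
Proof.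
move=> /AZ_constant_from[n wn]; apply/AZ_constant_from.
by exists n.+1; apply: constant_from_wcons.
Qed.

Lemma dZ_wcons b w : AZ w -> dZ (wcons b w) = b%:Z + 2 * dZ w.
Proof.
move=> /AZ_constant_from[n wn].
by rewrite (dZE wn) (dZE (constant_from_wcons b wn)) dZ_at_wcons.
Qed.

Lemma AZ_wtail w : AZ w -> AZ (wtail w).
Proof.
move=> /AZ_constant_from[n wn]; apply/AZ_constant_from; exists n => k nk.
by rewrite /wtail (wn k.+1 (leqW nk)) (wn n.+1 (leqnSn n)).
Qed.

Lemma wcons_head_wtail w : wcons (w 0%N) (wtail w) = w.
Proof. by apply/funext => -[]. Qed.

Lemma dZ_head_wtail w : AZ w -> dZ w = (w 0%N)%:Z + 2 * dZ (wtail w).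
Proof.
by move=> Aw; rewrite -{1}(wcons_head_wtail w) dZ_wcons //; apply: AZ_wtail.
Qed.

Lemma bit_double_inj (b c : bool) (x y : int) :
  b%:Z + 2 * x = c%:Z + 2 * y -> b = c /\ x = y.
Proof. by case: b; case: c => /= h; split => //; lia. Qed.

Lemma dZ_inj u v : AZ u -> AZ v -> dZ u = dZ v -> u = v.
Proof.
move=> Au Av duv; apply/funext => k.
elim: k u v Au Av duv => [|k IHk] u v Au Av;
  rewrite (dZ_head_wtail Au) (dZ_head_wtail Av);
  move=> /bit_double_inj[head_eq tail_eq] //.
exact: (IHk _ _ (AZ_wtail Au) (AZ_wtail Av) tail_eq).
Qed.

Lemma dZ_surj n : exists2 w, AZ w & dZ w = n.
Proof.
suff nat_case m :
    (exists2 w, AZ w & dZ w = m%:Z) /\ (exists2 w, AZ w & dZ w = - m.+1%:Z).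
  by case: n => m; [case: (nat_case m) | rewrite NegzE; case: (nat_case m)].
elim/ltn_ind: m => -[_|m IHm].
  have const_AZ b : AZ (fun=> b) by apply/AZ_constant_from; exists 0%N.
  by split; [exists (fun=> false) | exists (fun=> true)]; rewrite ?dZ_const.
have m1E := odd_double_half m.+1.
have half_lt : (m.+1./2 < m.+1)%N by move: m1E; rewrite -addnn; lia.
have [[w Aw dw] [v Av dv]] := IHm _ half_lt.
split; [exists (wcons (odd m.+1) w) | exists (wcons (~~ odd m.+1) v)];
  try exact: AZ_wcons;
  rewrite dZ_wcons // ?dw ?dv -{3}m1E -addnn; by case: (odd m.+1) => /=; lia.
Qed.

Definition dZ_inv (n : int) : word :=
  xget (fun=> false) [set w | AZ w /\ dZ w = n].

Lemma dZ_invP n : AZ (dZ_inv n) /\ dZ (dZ_inv n) = n.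
Proof.
have [w Aw dw] := dZ_surj n.
exact: (xgetI (fun=> false) (P := [set w | AZ w /\ dZ w = n]) (conj Aw dw)).
Qed.

Lemma dZK w : AZ w -> dZ_inv (dZ w) = w.
Proof. by move=> Aw; have [Ainv dinv] := dZ_invP (dZ w); apply: dZ_inj. Qed.

Definition int_of_nat (k : nat) : int :=
  if odd k then - (k./2.+1)%:Z else (k./2)%:Z.

Lemma int_of_nat_inj : injective int_of_nat.
Proof.
move=> i j; have iE := odd_double_half i; have jE := odd_double_half j.
by rewrite /int_of_nat; move: iE jE; case: (odd i); case: (odd j);
  rewrite /= -!addnn => iE jE; lia.
Qed.

Lemma int_of_nat_surj n : exists k, int_of_nat k = n.
Proof.
case: n => m; first by exists m.*2; rewrite /int_of_nat odd_double doubleK.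
by exists m.*2.+1; rewrite /int_of_nat /= odd_double /= NegzE uphalf_double.
Qed.

Definition AZ_enum (k : nat) : word := dZ_inv (int_of_nat k).

Lemma dZ_AZ_enum k : dZ (AZ_enum k) = int_of_nat k.
Proof. by case: (dZ_invP (int_of_nat k)). Qed.

Lemma AZ_enum_bij : set_bij setT AZ AZ_enum.
Proof.
split.
- by move=> k _; case: (dZ_invP (int_of_nat k)).
- by move=> i j _ _ ij; apply: int_of_nat_inj; rewrite -!dZ_AZ_enum ij.
- move=> w Aw; have [k kE] := int_of_nat_surj (dZ w).
  by exists k => //; rewrite /AZ_enum kE dZK.
Qed.

Lemma periodicz (U V : zmodType) (f : U -> V) (T : U) :
  periodic f T -> forall (n : int) a, f (a + T *~ n) = f a.
Proof.
move=> fT [] m a; first exact: periodicn.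
by rewrite -{2}[a](addrK (T *~ Negz m)) NegzE mulrNz opprK -pmulrn periodicn.
Qed.

Section real_line.
Variable R : realType.
Local Notation mu := (@lebesgue_measure R).
Local Notation I01 := (@I01 R).

Lemma cexpi_2pi_addz (t : R) (n : int) :
  cexpi (2 * pi * (t + n%:~R)) = cexpi (2 * pi * t).
Proof.
have -> : 2 * pi * (t + n%:~R) = 2 * pi * t + (pi *+ 2) *~ n.
  by rewrite mulrDr -mulrzr mulr2n; ring.
by rewrite /cexpi (periodicz (@cosD2pi R)) (periodicz (@sinD2pi R)).
Qed.

(* The measure instance of [pushforward] depends on a measurability proof
   that instance inference cannot supply, hence this named copy. *)
Definition shifted_lebesgue (a : R) : set (measurableTypeR R) -> \bar R :=
  pushforward mu (fun x : measurableTypeR R => x + a).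

Section shifted_lebesgue_measure.
Variable a : R.

Let measurable_shift :
  measurable_fun setT (fun x : measurableTypeR R => x + a).
Proof. exact: measurable_funD. Qed.

Let shifted_lebesgue0 : shifted_lebesgue a set0 = 0%E.
Proof. by apply: measure0; exact: measurable_shift. Qed.

Let shifted_lebesgue_ge0 A : (0 <= shifted_lebesgue a A)%E.
Proof. by apply: measure_ge0; exact: measurable_shift. Qed.

Let shifted_lebesgue_sigma_additive :
  semi_sigma_additive (shifted_lebesgue a).
Proof.
move=> F mF tF mUF; rewrite /shifted_lebesgue /pushforward preimage_bigcup.
have mpre (B : set (measurableTypeR R)) : measurable B ->
    measurable ((fun x : measurableTypeR R => x + a) @^-1` B).
  by move=> mB; have := measurable_shift measurableT mB; rewrite setTI.
apply: measure_semi_sigma_additive; first by move=> n; exact: mpre.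
- apply/trivIsetP => /= i j _ _ ij; rewrite -preimage_setI.
  by move/trivIsetP : tF => /(_ i j I I ij) ->; rewrite preimage_set0.
- by rewrite -preimage_bigcup; exact: mpre.
Qed.

HB.instance Definition _ := isMeasure.Build _ _ _ (shifted_lebesgue a)
  shifted_lebesgue0 shifted_lebesgue_ge0 shifted_lebesgue_sigma_additive.

End shifted_lebesgue_measure.

Lemma shifted_lebesgueE a A : measurable A -> shifted_lebesgue a A = mu A.
Proof.
move=> mA; apply/esym.
have := @lebesgue_measure_unique R (shifted_lebesgue a); apply => //.
move=> _ [[x y] _ <-] /=; rewrite /shifted_lebesgue /pushforward.
have -> : (fun t : R => t + a) @^-1` `]x, y] = `]x - a, y - a]%classic.
  by apply/seteqP; split => z /=; rewrite !in_itv /= ?lerBrDr ?ltrBlDr.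
rewrite !lebesgue_measure_itv /= !lte_fin ltrD2r; case: ifP => // _.
by rewrite -EFinD; congr EFin; ring.
Qed.

Lemma ge0_integral_shift (a : R) (D : set R) (f : R -> \bar R) :
  measurable D -> measurable_fun D f -> (forall x, D x -> (0 <= f x)%E) ->
  (\int[mu]_(x in D) f x =
   \int[mu]_(x in (fun x : R => (x + a)%R) @^-1` D) f (x + a)%R)%E.
Proof.
move=> mD mf f0; transitivity (\int[shifted_lebesgue a]_(x in D) f x)%E.
  by apply: eq_measure_integral => A mA _; exact/esym/shifted_lebesgueE.
rewrite ge0_integral_pushforward //; first exact: measurable_funD.
by move=> x /[!inE]; apply: f0.
Qed.

Lemma measurable_fun_shift d (T : measurableType d) (h : R -> T) (a : R) :
  measurable_fun setT h -> measurable_fun I01 (fun x => h (x + a)).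
Proof.
move=> mh; apply: (measurable_funS measurableT) => //.
exact: measurableT_comp mh (measurable_funD _ _).
Qed.

Lemma I01P (x : R) : I01 x <-> 0 <= x < 1.
Proof. by rewrite /I01 /= in_itv. Qed.

Lemma floor_addz (x : R) (n : int) : I01 x -> Num.floor (x + n%:~R) = n.
Proof.
move=> /I01P /andP[x0 x1]; apply: floor_def.
by rewrite intrD; apply/andP; split; lra.
Qed.

Lemma floor_double (x : R) : I01 x -> Num.floor (2 * x) = (omega_x x)%:Z.
Proof.
move=> /I01P /andP[x0 x1]; rewrite /omega_x /tau1 /r.
have [xlt|xge] := ltP x (2^-1).
  have -> : Num.floor (2 * x) = 0.
    by apply: floor_def; rewrite add0r mulr0z mulr1z; apply/andP; split; lra.
  rewrite mulr0z subr0; suff -> : ((2 * x + 1) / 2 == x) = false by [].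
  by apply/negbTE/eqP => ?; lra.
have -> : Num.floor (2 * x) = 1.
  by apply: floor_def; rewrite mulr1z intrD; apply/andP; split; lra.
suff -> : ((2 * x - 1%:~R + 1) / 2 == x) = true by [].
by apply/eqP; rewrite mulr1z; field.
Qed.

Lemma double_add_dZ (x : R) (w : word) : I01 x -> AZ w ->
  2 * (x + (dZ w)%:~R) = r x + (dZ (wcons (omega_x x) w))%:~R.
Proof.
move=> Ix Aw; rewrite dZ_wcons // /r floor_double // intrD intrM.
by have -> : (2%:Z)%:~R = 2 :> R by []; ring.
Qed.

Definition unit_cell (k : nat) : set R :=
  `[(int_of_nat k)%:~R, (int_of_nat k)%:~R + 1[%classic.

Lemma unit_cellP k t : unit_cell k t <-> Num.floor t = int_of_nat k.
Proof.
have := floor_eq t (int_of_nat k).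
rewrite intrD /= /unit_cell /= in_itv /= => floorE.
by split => [tk|tk]; [apply/eqP; rewrite floorE | rewrite -floorE tk].
Qed.

Lemma trivIset_unit_cell : trivIset setT unit_cell.
Proof.
apply/trivIsetP => i j _ _ ij; apply/seteqP; split => // t.
move=> [/unit_cellP ti /unit_cellP tj].
by move: ij; rewrite (int_of_nat_inj (etrans (esym ti) tj)) eqxx.
Qed.

Lemma bigcup_unit_cell : \bigcup_k unit_cell k = setT.
Proof.
apply/seteqP; split => // t _; have [k kE] := int_of_nat_surj (Num.floor t).
by exists k => //; apply/unit_cellP.
Qed.

Lemma preimage_shift_unit_cell k :
  (fun x : R => x + (int_of_nat k)%:~R) @^-1` unit_cell k = I01.
Proof.
apply/seteqP; split => x; rewrite /unit_cell /I01 /= !in_itv /= => /andP[x0 x1];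
  apply/andP; split; lra.
Qed.

Lemma eq_sqnormA (g h : R -> word -> C R) :
  (forall x w, I01 x -> AZ w -> g x w = h x w) -> sqnormA g = sqnormA h.
Proof.
move=> gh; apply: eq_integral => x /[!inE] Ix.
by apply: eq_esum => w Aw; rewrite gh.
Qed.

Lemma sqnormA_eq0 (g : R -> word -> C R) :
  (forall x w, I01 x -> AZ w -> g x w = 0) -> sqnormA g = 0%E.
Proof.
move=> g0; rewrite /sqnormA (eq_integral (cst 0%E)) ?integral0 //.
move=> x /[!inE] Ix.
by apply: esum1 => w Aw; rewrite g0 // /csq /cre /cim /= expr0n /= addr0.
Qed.

Lemma sqnormA_Eop (f : R -> C R) :
  measurable_fun setT (@cre R \o f) -> measurable_fun setT (@cim R \o f) ->
  sqnormA (Eop f) = sqnormR f.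
Proof.
move=> mre mim; pose h t := (csq (f t))%:E.
have mh : measurable_fun setT h.
  by apply/measurable_EFinP; apply: measurable_funD; apply: measurable_funX.
have h0 t : (0 <= h t)%E by rewrite lee_fin /csq addr_ge0 // sqr_ge0.
rewrite /sqnormA /sqnormR.
transitivity (\int[mu]_(x in I01) \sum_(k <oo) h (x + (int_of_nat k)%:~R)%R)%E.
  apply: eq_integral => x _.
  rewrite nneseries_esumT // (reindex_esum _ _ _ _ AZ_enum_bij).
  by apply: eq_esum => k _; rewrite /Eop dZ_AZ_enum.
etransitivity.
  apply: (@integral_nneseries _ _ _ _ _ _
    (fun k (x : measurableTypeR R) => h (x + (int_of_nat k)%:~R)%R)) => //.
  - exact: measurable_itv.
  - by move=> k; apply: measurable_fun_shift.
transitivity (\sum_(k <oo) \int[mu]_(t in unit_cell k) h t)%E.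
  apply: eq_eseriesr => k _.
  rewrite (ge0_integral_shift (int_of_nat k)%:~R) ?preimage_shift_unit_cell //.
  - exact: measurable_itv.
  - exact: measurable_funS measurableT _ mh.
rewrite -ge0_integral_bigcup ?bigcup_unit_cell //.
- by move=> k; exact: measurable_itv.
- exact: trivIset_unit_cell.
Qed.

Lemma L2A_Eop (f : R -> C R) : L2R f -> L2A (Eop f).
Proof.
case=> mre mim fin; split; last by rewrite sqnormA_Eop.
move=> w _; have shift_dZ := @measurable_fun_shift _ _ _ (dZ w)%:~R.
by split; [exact: shift_dZ mre | exact: shift_dZ mim].
Qed.

Definition Einv (g : R -> word -> C R) (t : R) : C R :=
  g (t - (Num.floor t)%:~R) (dZ_inv (Num.floor t)).

Lemma Eop_Einv (g : R -> word -> C R) (x : R) (w : word) :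
  I01 x -> AZ w -> Eop (Einv g) x w = g x w.
Proof. by move=> Ix Aw; rewrite /Eop /Einv floor_addz // dZK // addrK. Qed.

Lemma measurable_Einv (g : R -> word -> C R) (p : C R -> R) :
  (forall w, AZ w -> measurable_fun I01 (p \o g ^~ w)) ->
  measurable_fun setT (p \o Einv g).
Proof.
move=> mg; suff : measurable_fun (\bigcup_k unit_cell k) (p \o Einv g).
  by rewrite bigcup_unit_cell.
apply/measurable_fun_bigcup => k; first exact: measurable_itv.
apply: (eq_measurable_fun
  (fun t : R => p (g (t - (int_of_nat k)%:~R) (AZ_enum k)))).
  by move=> t /[!inE] /unit_cellP tk; rewrite /Einv /= tk.
apply: (measurable_comp (F := I01) (f := fun x => p (g x (AZ_enum k))));
  first exact: measurable_itv.
- by move=> _ [t /= tk <-]; rewrite -(preimage_shift_unit_cell k) /= subrK.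
- by apply: mg; case: (dZ_invP (int_of_nat k)).
- exact/(measurable_funS measurableT)/measurable_funB.
Qed.

Lemma L2R_Einv (g : R -> word -> C R) : L2A g -> L2R (Einv g).
Proof.
case=> mg fin; have mre := measurable_Einv (fun w Aw => (mg w Aw).1).
have mim := measurable_Einv (fun w Aw => (mg w Aw).2).
split=> //; rewrite -(sqnormA_Eop mre mim).
by rewrite (eq_sqnormA (h := g)) // => x w; apply: Eop_Einv.
Qed.

Lemma Eop_That (f : R -> C R) (x : R) (w : word) :
  Eop (That f) x w = Ttil (Eop f) x w.
Proof. by rewrite /Eop /That /Ttil cexpi_2pi_addz. Qed.

Lemma Eop_Uhat (f : R -> C R) (x : R) (w : word) :
  I01 x -> AZ w -> Eop (Uhat f) x w = Util (Eop f) x w.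
Proof. by move=> Ix Aw; rewrite /Eop /Uhat /Util /rtilde /= double_add_dZ. Qed.

End real_line.

Theorem proposition3p13 (R : realType) :
  [/\ (* E is linear *)
      (forall (a b : C R) (f g : R -> C R) (x : R) (w : word),
          Eop (fun t => a * f t + b * g t) x w = a * Eop f x w + b * Eop g x w),
      (* E maps L^2(R) into L^2(lambda) isometrically *)
      (forall f : R -> C R, L2R f -> L2A (Eop f) /\ sqnormA (Eop f) = sqnormR f),
      (* E is onto (up to lambda-null functions) *)
      (forall g : R -> word -> C R, L2A g ->
          exists f : R -> C R, L2R f /\ sqnormA (fun x w => Eop f x w - g x w) = 0%E),
      (* E That = Ttil E  on L^2(R) *)
      (forall f : R -> C R, L2R f ->
          sqnormA (fun x w => Eop (That f) x w - Ttil (Eop f) x w) = 0%E)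
    & (* E Uhat = Util E  on L^2(R) *)
      (forall f : R -> C R, L2R f ->
          sqnormA (fun x w => Eop (Uhat f) x w - Util (Eop f) x w) = 0%E)].
Proof.
split=> //.
- by move=> f fL2; split; [exact: L2A_Eop | case: fL2 => *; exact: sqnormA_Eop].
- move=> g gL2; exists (Einv g); split; first exact: L2R_Einv.
  by apply: sqnormA_eq0 => x w Ix Aw; rewrite Eop_Einv // subrr.
- by move=> f _; apply: sqnormA_eq0 => x w _ _; rewrite Eop_That subrr.
- by move=> f _; apply: sqnormA_eq0 => x w Ix Aw; rewrite Eop_Uhat // subrr.
Qed.
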